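(* Let $\rho\in\mathcal S_=(\hat CQQ')$ be classical on $\hat C$ and let $f,g$ be real functions on the alphabet of $\hat C$ with $f(\hat c)\le g(\hat c)$ for all $\hat c$. Then for any $\alpha\in[\frac12,1)\cup(1,\infty]$, $$\widetilde H^{\uparrow,g}_\alpha(Q|\hat CQ')_\rho\le\widetilde H^{\uparrow,f}_\alpha(Q|\hat CQ')_\rho.$$
   Context: $\widetilde H^\uparrow_\alpha(A|B)_\rho=\sup_{\sigma_B}-\widetilde D_\alpha(\rho_{AB}\|\mathbb 1_A\otimes\sigma_B)$ with sandwiched Rényi divergence $\widetilde D_\alpha(\rho\|\sigma)=\frac1{\alpha-1}\log\mathrm{Tr}[(\sigma^{\frac{1-\alpha}{2\alpha}}\rho\sigma^{\frac{1-\alpha}{2\alpha}})^\alpha]$. For $\rho=\sum_{\hat c}\rho(\hat c)|\hat c\rangle\langle\hat c|\otimes\rho_{|\hat c}$, $\widetilde H^{\uparrow,f}_\alpha(Q|\hat CQ')_\rho=\frac{\alpha}{1-\alpha}\log\sum_{\hat c}\rho(\hat c)2^{\frac{1-\alpha}{\alpha}(\widetilde H^\uparrow_\alpha(Q|Q')_{\rho_{|\hat c}}-f(\hat c))}$. *)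

From HB Require Import structures.
From mathcomp Require Import all_boot all_order all_algebra.
From mathcomp Require Import all_classical all_reals all_analysis.
From mathcomp Require Import complex mxtens.
Set Implicit Arguments.
Unset Strict Implicit.
Unset Printing Implicit Defensive.
Import Order.TTheory GRing.Theory Num.Theory.
Local Open Scope ring_scope.

Definition adjmx (R : realType) (m n : nat) (A : 'M[R[i]]_(m, n)) : 'M[R[i]]_(n, m) :=
  (map_mx (@conjc R) A)^T.

Definition psd (R : realType) (n : nat) (A : 'M[R[i]]_n) : Prop :=
  adjmx A = A /\ forall v : 'cV[R[i]]_n, 0 <= (adjmx v *m A *m v) 0 0.

Definition density (R : realType) (n : nat) (A : 'M[R[i]]_n) : Prop :=
  psd A /\ \tr A = 1.

Definition unitary (R : realType) (n : nat) (U : 'M[R[i]]_n) : Prop :=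
  U *m adjmx U = 1%:M.

(* scalar power with the support convention 0^t = 0 (for every t) *)
Definition spow (R : realType) (x t : R) : R :=
  if x == 0 then 0 else powR x t.

Definition psd_decomp (R : realType) (n : nat) (A : 'M[R[i]]_n)
    (UD : 'M[R[i]]_n * 'rV[R]_n) : Prop :=
  [/\ unitary UD.1, (forall j, 0 <= UD.2 0 j) &
      A = UD.1 *m diag_mx (map_mx (fun x => (x%:C)%C) UD.2) *m adjmx UD.1].

(* matrix power A^t of a PSD matrix via functional calculus, taken on the
   support of A (eigenvalue 0 is mapped to 0), as usual for sandwiched
   Renyi divergences; 0 for non-diagonalizable input (never used). *)
Definition mpow (R : realType) (n : nat) (A : 'M[R[i]]_n) (t : R) : 'M[R[i]]_n :=
  match pselect (exists UD, psd_decomp A UD) with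
  | left h => let UD := projT1 (cid h) in
      UD.1 *m diag_mx (map_mx (fun x => (spow x t)%:C%C) UD.2) *m adjmx UD.1
  | right _ => 0
  end.

Definition log2 (R : realType) (x : R) : R := ln x / ln 2.
Definition pow2 (R : realType) (x : R) : R := powR 2 x.

Local Open Scope ereal_scope.

Definition sandD (R : realType) (n : nat) (a : R) (rho sigma : 'M[R[i]]_n) : \bar R :=
  let b := ((1 - a) / (2 * a))%R in
  let Q := complex.Re (\tr (mpow (mpow sigma b *m rho *m mpow sigma b) a)) in
  if ((1 < a)%R && ~~ (rho <= sigma)%MS) then +oo
  else if Q == 0%R then +oo
  else ((a - 1)^-1 * log2 Q)%:E.

(* alpha = oo: max-relative entropy D_max = log inf{l > 0 | rho <= l sigma}
   (the alpha -> oo limit of the sandwiched divergence). *)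
Definition Dmax (R : realType) (n : nat) (rho sigma : 'M[R[i]]_n) : \bar R :=
  ereal_inf [set (log2 l)%:E | l in [set l : R | (0 < l)%R /\ psd ((l%:C)%C *: sigma - rho)]].

Definition sandDe (R : realType) (n : nat) (a : \bar R) (rho sigma : 'M[R[i]]_n) : \bar R :=
  match a with
  | EFin r => sandD r rho sigma
  | _ => Dmax rho sigma
  end.

(* H~^up_alpha(A|B)_rho = sup_{sigma_B} - D~_alpha(rho_AB || 1_A (x) sigma_B);
   it is always a finite real number for a state rho, we return it in R. *)
Definition Hup (R : realType) (dA dB : nat) (a : \bar R) (rho : 'M[R[i]]_(dA * dB)) : R :=
  fine (ereal_sup [set - sandDe a rho ((1%:M : 'M[R[i]]_dA) *t sigma)
                  | sigma in [set sigma : 'M[R[i]]_dB | density sigma]]).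

(* H~^{up,f}_alpha(Q|C Q')_rho for rho = sum_c p(c)|c><c| (x) rho_c, with
   rho_c states on Q Q' (dimension dQ * dQ'). For alpha = oo the formula is
   the alpha -> oo limit: - log sum_c p(c) 2^{-(H(c) - f(c))}. *)
Definition HupF (R : realType) (K : finType) (dQ dQ' : nat) (a : \bar R)
    (p : K -> R) (rhoc : K -> 'M[R[i]]_(dQ * dQ')) (f : K -> R) : R :=
  match a with
  | EFin r => (r / (1 - r) * log2 (\sum_c p c *
                 pow2 ((1 - r) / r * (Hup (r%:E) (rhoc c) - f c))))%R
  | +oo => (- log2 (\sum_c p c * pow2 (- (Hup +oo (rhoc c) - f c))))%R
  | -oo => 0%R
  end.

From HB Require Import structures.
From mathcomp Require Import all_boot all_order all_algebra.
From mathcomp Require Import all_classical all_reals all_analysis.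
From mathcomp Require Import complex mxtens.
Set Implicit Arguments.
Unset Strict Implicit.
Unset Printing Implicit Defensive.
Import Order.TTheory GRing.Theory Num.Theory.
Local Open Scope ring_scope.

(* Both for finite alpha and for alpha = oo, H^{up,f} is an exponential mean
   k^-1 log2 (sum_c p(c) 2^(k h(c))) of h = H - f, with k = (1 - alpha)/alpha,
   resp. k = -1.  Such a mean is nondecreasing in h whatever the sign of k,
   and raising f lowers h.  Hence only the nonnegativity of p is used. *)

Lemma pow2_gt0 (R : realType) (x : R) : 0 < pow2 x.
Proof. by rewrite /pow2 powR_gt0. Qed.

Lemma ler_pow2 (R : realType) (x y : R) : x <= y -> pow2 x <= pow2 y.
Proof. by move=> xy; apply: ler_powR; rewrite ?ler1n. Qed.

Lemma ler_log2 (R : realType) (x y : R) : 0 < x -> x <= y -> log2 x <= log2 y.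
Proof.
move=> x0 xy; rewrite /log2 ler_pM2r; last by rewrite invr_gt0 ln_gt0 ?ltr1n.
by rewrite ler_ln // posrE // (lt_le_trans x0).
Qed.

Section ExponentialMean.
Variables (R : realType) (K : finType) (p : K -> R).
Hypotheses (p_ge0 : forall c, 0 <= p c) (p_sum_gt0 : 0 < \sum_c p c).

Definition log2_expmean (k : R) (h : K -> R) : R :=
  k^-1 * log2 (\sum_c p c * pow2 (k * h c)).

Lemma sum_pow2_gt0 (x : K -> R) : 0 < \sum_c p c * pow2 (x c).
Proof.
have term_ge0 c : 0 <= p c * pow2 (x c) by rewrite mulr_ge0 // ltW // pow2_gt0.
rewrite lt_def sumr_ge0 ?andbT //; apply: contraTneq p_sum_gt0 => /psumr_eq0P.
move=> /(_ (fun c _ => term_ge0 c)) term_eq0.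
rewrite big1 ?ltxx // => c _; apply/eqP.
by move/eqP: (term_eq0 c isT); rewrite mulf_eq0 (gt_eqF (pow2_gt0 _)) orbF.
Qed.

Lemma ler_sum_pow2 (x y : K -> R) : (forall c, x c <= y c) ->
  \sum_c p c * pow2 (x c) <= \sum_c p c * pow2 (y c).
Proof. by move=> xy; apply: ler_sum => c _; rewrite ler_wpM2l // ler_pow2. Qed.

Lemma log2_expmean_le (k : R) (h1 h2 : K -> R) : (forall c, h1 c <= h2 c) ->
  log2_expmean k h1 <= log2_expmean k h2.
Proof.
move=> h12; rewrite /log2_expmean; case: (ltrgtP k 0) => [k_lt0 | k_gt0 | ->].
- rewrite ler_nM2l ?invr_lt0 //; apply: ler_log2; first exact: sum_pow2_gt0.
  by apply: ler_sum_pow2 => c; rewrite ler_nM2l.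
- rewrite ler_pM2l ?invr_gt0 //; apply: ler_log2; first exact: sum_pow2_gt0.
  by apply: ler_sum_pow2 => c; rewrite ler_pM2l.
- by rewrite invr0 !mul0r.
Qed.

End ExponentialMean.

Lemma HupF_finE (R : realType) (K : finType) (dQ dQ' : nat) (r : R)
    (p : K -> R) (rhoc : K -> 'M[R[i]]_(dQ * dQ')) (f : K -> R) :
  HupF r%:E p rhoc f =
  log2_expmean p ((1 - r) / r) (fun c => Hup r%:E (rhoc c) - f c).
Proof. by rewrite /= /log2_expmean invf_div. Qed.

Lemma HupF_pinftyE (R : realType) (K : finType) (dQ dQ' : nat)
    (p : K -> R) (rhoc : K -> 'M[R[i]]_(dQ * dQ')) (f : K -> R) :
  HupF +oo%E p rhoc f = log2_expmean p (-1) (fun c => Hup +oo%E (rhoc c) - f c).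
Proof.
rewrite /= /log2_expmean invrN1 mulN1r.
by congr (- log2 _); apply: eq_bigr => c _; rewrite mulN1r.
Qed.

Theorem mainTheorem4 (R : realType) (K : finType) (dQ dQ' : nat)
    (p : K -> R) (rhoc : K -> 'M[R[i]]_(dQ * dQ')) (f g : K -> R) (a : \bar R) :
  (forall c, 0 <= p c) -> \sum_c p c = 1 ->
  (forall c, density (rhoc c)) ->
  (forall c, f c <= g c) ->
  ((2^-1)%:E <= a)%E -> a != 1%:E ->
  HupF a p rhoc g <= HupF a p rhoc f.
Proof.
move=> p_ge0 p_sum1 _ fg a_ge _.
have p_sum_gt0 : 0 < \sum_c p c by rewrite p_sum1.
have Hg_le_Hf (x : R) c : x - g c <= x - f c by rewrite lerD2l lerN2 fg.
case: a a_ge => [r | | //] _.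
- by rewrite !HupF_finE; apply: (log2_expmean_le p_ge0 p_sum_gt0) => c; exact: Hg_le_Hf.
- by rewrite !HupF_pinftyE; apply: (log2_expmean_le p_ge0 p_sum_gt0) => c; exact: Hg_le_Hf.
Qed.
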